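(* Let $n\ge2$, $\tau\in[n-1]$, $\mu_{\mathrm{L}},\mu_{\mathrm{R}}\in\mathbb{R}$, $\eta=\tau/n$, and $\boldsymbol{\mu}\in\mathbb{R}^n$ with $\mu_i=\mu_{\mathrm{L}}\mathbb{1}\{i\le\tau\}+\mu_{\mathrm{R}}\mathbb{1}\{i>\tau\}$. Let $T'=\{t_0\in\mathbb{Z}^+:|t_0-\tau|\le\min(\tau,n-\tau)/2\}$. Then $$\min_{t_0\in T'}|\boldsymbol{v}_{t_0}^\top\boldsymbol{\mu}|\ge\frac{\sqrt3}{3}|\mu_{\mathrm{L}}-\mu_{\mathrm{R}}|\sqrt{n\eta(1-\eta)}.$$
   Context: For $t\in[n-1]$, $\boldsymbol{v}_t=\bigl(\sqrt{\tfrac{n-t}{tn}}\boldsymbol{1}_t^\top,\,-\sqrt{\tfrac{t}{(n-t)n}}\boldsymbol{1}_{n-t}^\top\bigr)^\top\in\mathbb{R}^n$, where $\boldsymbol{1}_k$ is the all-ones vector of length $k$. *)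

From mathcomp Require Import all_boot all_order all_algebra.
Set Implicit Arguments. Unset Strict Implicit. Unset Printing Implicit Defensive.
Import Order.TTheory GRing.Theory Num.Theory.
Local Open Scope ring_scope.

(* v_t in R^n (indices i : 'I_n are 0-based, so the paper's i <= t is (i < t)%N):
   first t entries sqrt((n-t)/(t n)), last n-t entries -sqrt(t/((n-t) n)).
   Intended for 1 <= t <= n-1. *)
Definition vt (R : rcfType) (n t : nat) : 'cV[R]_n :=
  \col_(i < n) (if (i < t)%N
                then Num.sqrt ((n - t)%:R / (t%:R * n%:R))
                else - Num.sqrt (t%:R / ((n - t)%:R * n%:R))).

Definition mu_vec (R : rcfType) (n tau : nat) (muL muR : R) : 'cV[R]_n :=
  \col_(i < n) (if (i < tau)%N then muL else muR).

Definition Tprime (R : rcfType) (n tau : nat) (t0 : nat) : Prop :=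
  (0 < t0)%N /\ `| (t0%:R : R) - tau%:R | <= (Num.min (tau%:R) ((n - tau)%:R)) / 2.

(** The weights of [v_t] sum to zero, so [v_t^T mu = (muL - muR) v_t^T 1_{<= tau}],
    which equals [(muL - muR) sqrt(t/((n-t)n)) (n-tau)] for [t <= tau] and
    [(muL - muR) sqrt((n-t)/(tn)) tau] for [t >= tau].  Squaring, the bound in the
    first case reduces to [3 t (n - tau) >= tau (n - t)], which holds as soon as
    [tau - t] is at most half of both [tau] and [n - tau]; the second case is the
    first one for the reflected change point [n - tau] seen from [n - t]. *)

From mathcomp Require Import all_boot all_order all_algebra.
From mathcomp Require Import ring lra zify.
Import Order.TTheory GRing.Theory Num.Theory.
Local Open Scope ring_scope.

Lemma sum_step_mul (R : comPzRingType) (a b c d : R) (n s t : nat) :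
  (s <= t <= n)%N ->
  \sum_(i < n) (if (i < s)%N then a else b) * (if (i < t)%N then c else d) =
  a * c *+ s + b * c *+ (t - s) + b * d *+ (n - t).
Proof.
move=> /andP[st tn].
rewrite -(big_mkord xpredT (fun i => (if (i < s)%N then a else b) *
                                      (if (i < t)%N then c else d))).
rewrite (big_cat_nat (leq0n t) tn) (big_cat_nat (leq0n s) st) /=.
congr (_ + _ + _).
- under eq_big_nat => i /andP[_ lt_is] do rewrite lt_is (leq_trans lt_is st).
  by rewrite sumr_const_nat subn0.
- under eq_big_nat => i /andP[le_si lt_it] do rewrite ltnNge le_si lt_it.
  by rewrite sumr_const_nat.
- under eq_big_nat => i /andP[le_ti _] do rewrite !ltnNge le_ti (leq_trans st le_ti).
  by rewrite sumr_const_nat.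
Qed.

Lemma mul_sqrtr_nneg (R : rcfType) (x c : R) :
  0 <= c -> Num.sqrt x * c = Num.sqrt (x * c ^+ 2).
Proof.
move=> c_ge0; have [x_ge0 | x_lt0] := leP 0 x.
  by rewrite sqrtrM // sqrtr_sqr ger0_norm.
by rewrite ltr0_sqrtr // mul0r ler0_sqrtr // mulr_le0_ge0 ?sqr_ge0 // ltW.
Qed.

Lemma vt_weights_balance (R : rcfType) (n t : R) : 0 < t -> t < n ->
  Num.sqrt ((n - t) / (t * n)) * t = Num.sqrt (t / ((n - t) * n)) * (n - t).
Proof.
move=> t_gt0 t_lt_n.
rewrite !mul_sqrtr_nneg ?subr_ge0 ?ltW //; congr Num.sqrt.
by field; rewrite !lt0r_neq0 ?subr_gt0 //; apply: lt_trans t_lt_n.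
Qed.

Lemma vt_mu_vec (R : rcfType) (n t tau : nat) (muL muR : R) :
  (0 < t < n)%N -> (tau <= n)%N ->
  ((vt R n t)^T *m mu_vec n tau muL muR) ord0 ord0 =
  (muL - muR) * (if (t <= tau)%N
                 then Num.sqrt (t%:R / ((n - t)%:R * n%:R)) * (n - tau)%:R
                 else Num.sqrt ((n - t)%:R / (t%:R * n%:R)) * tau%:R).
Proof.
move=> /andP[t_gt0 t_lt_n] tau_le_n.
rewrite mxE; under eq_bigr do rewrite !mxE.
set a := Num.sqrt _; set b := Num.sqrt _.
have balance : a * t%:R = b * (n%:R - t%:R).
  by rewrite /a /b natrB ?(ltnW t_lt_n) // vt_weights_balance ?ltr0n ?ltr_nat.
case: leqP => [t_le_tau | tau_lt_t].
- rewrite sum_step_mul ?t_le_tau //.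
  rewrite -(mulr_natr (a * muL)) -(mulr_natr (- b * muL)) -(mulr_natr (- b * muR)).
  by rewrite !natrB // [a * _ * _]mulrAC balance; ring.
- under eq_bigr do rewrite mulrC.
  rewrite sum_step_mul ?(ltnW tau_lt_t) ?(ltnW t_lt_n) //.
  rewrite -(mulr_natr (muL * a)) -(mulr_natr (muR * a)) -(mulr_natr (muR * - b)).
  rewrite !natrB ?(ltnW tau_lt_t) ?(ltnW t_lt_n) //.
  by rewrite [muR * - b]mulrN [- _ * _]mulNr -[muR * b * _]mulrA -balance; ring.
Qed.

Lemma contrast_ge_sqrt_third (R : rcfType) (n t tau : R) :
  0 < t -> t <= tau -> tau < n -> 2 * (tau - t) <= tau -> 2 * (tau - t) <= n - tau ->
  Num.sqrt 3 / 3 * Num.sqrt (tau * (n - tau) / n)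
  <= Num.sqrt (t / ((n - t) * n)) * (n - tau).
Proof.
move=> t_gt0 t_le_tau tau_lt_n near_l near_r.
have n_gt0 : 0 < n by lra.
have nt_gt0 : 0 < n - t by lra.
have ntau_ge0 : 0 <= n - tau by lra.
rewrite -ler_sqr ?nnegrE ?mulr_ge0 ?sqrtr_ge0 ?invr_ge0 ?ler0n //.
rewrite !exprMn !sqr_sqrtr ?divr_ge0 ?mulr_ge0 ?ler0n //; try lra.
rewrite -subr_ge0.
have -> : t / ((n - t) * n) * (n - tau) ^+ 2 - 3 * 3^-1 ^+ 2 * (tau * (n - tau) / n)
    = (n - tau) * (3 * t * (n - tau) - tau * (n - t)) / (3 * n * (n - t)).
  by field; rewrite !lt0r_neq0.
rewrite divr_ge0 ?mulr_ge0 //; nra.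
Qed.

Theorem lemmaA1 (R : rcfType) (n tau : nat) (muL muR : R) :
  (2 <= n)%N -> (1 <= tau)%N -> (tau <= n - 1)%N ->
  let eta : R := tau%:R / n%:R in
  forall t0 : nat, Tprime R n tau t0 ->
    Num.sqrt 3 / 3 * `|muL - muR| * Num.sqrt (n%:R * eta * (1 - eta))
    <= `| ((vt R n t0)^T *m mu_vec n tau muL muR) ord0 ord0 |.
Proof.
move=> n_ge2 tau_gt0 tau_le eta t [t_gt0].
have tau_lt_n : (tau < n)%N by lia.
set N : R := n%:R; set T : R := t%:R; set U : R := tau%:R.
rewrite natrB ?(ltnW tau_lt_n) // -/N -/U ler_norml => /andP[near_l near_r].
have U_gt0 : 0 < U by rewrite ltr0n.
have U_lt_N : U < N by rewrite ltr_nat.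
have min_le_U : Num.min U (N - U) <= U by rewrite ge_min lexx.
have min_le_NU : Num.min U (N - U) <= N - U by rewrite ge_min lexx orbT.
have t_lt_n : (t < n)%N by rewrite -(ltr_nat R) -/T -/N; lra.
have -> : N * eta * (1 - eta) = U * (N - U) / N.
  by rewrite /eta; field; rewrite lt0r_neq0 // (lt_trans U_gt0).
rewrite vt_mu_vec ?t_gt0 ?(ltnW tau_lt_n) // normrM mulrAC [X in _ <= X]mulrC.
rewrite ler_wpM2r // !natrB ?(ltnW t_lt_n) ?(ltnW tau_lt_n) // -/N -/T -/U.
case: leqP => [t_le_tau | tau_lt_t].
- rewrite ger0_norm ?mulr_ge0 ?sqrtr_ge0 ?subr_ge0 ?(ltW U_lt_N) //.
  apply: contrast_ge_sqrt_third; rewrite ?ltr0n ?ler_nat //; lra.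
- rewrite ger0_norm ?mulr_ge0 ?sqrtr_ge0 ?ler0n //.
  have U_lt_T : U < T by rewrite ltr_nat.
  have := @contrast_ge_sqrt_third R N (N - T) (N - U).
  rewrite !subKr [(N - U) * U]mulrC; apply; lra.
Qed.
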